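(* Let $r,t$ be integers with $1 \leq t\leq r-2$. Then there exist an $r$-regular graph $G$ that has a $t$-factor and a set $\mathcal{O}$ of pairwise edge-disjoint odd cycles of $G$ such that every $t$-factor of $G$ is edge-disjoint from at least one cycle of $\mathcal{O}$.
   Context: All graphs are finite and loopless but may have parallel edges. A cycle is a connected $2$-regular subgraph; it is odd if it has an odd number of edges. A $t$-factor of $G$ is a spanning $t$-regular subgraph. *)

From mathcomp Require Import all_boot.
Set Implicit Arguments. Unset Strict Implicit. Unset Printing Implicit Defensive.

(* A finite loopless multigraph: vertex type, edge type, and the two ends of
   each edge; parallel edges are allowed since edges are a separate type. *)
Record multigraph := Multigraph {
  vert : finType;
  edge : finType;
  end1 : edge -> vert;
  end2 : edge -> vert;
  loopless : forall e, end1 e != end2 e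
}.

Section Defs.
Variable G : multigraph.

Definition incident (e : edge G) (v : vert G) : bool :=
  (end1 e == v) || (end2 e == v).

(* degree of v in the subgraph with edge set F (no loops, so each incident
   edge counts once) *)
Definition deg (F : {set edge G}) (v : vert G) : nat :=
  #|[set e in F | incident e v]|.

Definition regular (r : nat) : Prop := forall v, deg [set: edge G] v = r.

Definition factor (t : nat) (F : {set edge G}) : Prop := forall v, deg F v = t.

Definition verts_of (C : {set edge G}) : {set vert G} :=
  [set v | [exists e in C, incident e v]].

Definition adj_in (C : {set edge G}) : rel (vert G) :=
  fun u v => [exists e in C, ((end1 e == u) && (end2 e == v))
                          || ((end1 e == v) && (end2 e == u))].

Definition is_cycle (C : {set edge G}) : Prop :=
  C != set0 /\
  (forall v, v \in verts_of C -> deg C v = 2) /\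
  (forall u v, u \in verts_of C -> v \in verts_of C -> connect (adj_in C) u v).

Definition is_odd_cycle (C : {set edge G}) : Prop := is_cycle C /\ odd #|C|.

End Defs.

From mathcomp Require Import all_boot zify.
Set Implicit Arguments. Unset Strict Implicit. Unset Printing Implicit Defensive.

(* Take k = t/2 + 1 triangles hub-x_i-y_i sharing the hub.  Each triangle vertex P is
   brought to degree r by a pendant gadget on new vertices X, Y, Z with edge multiplicities
   PX = r - 2w, XY = XZ = w, YZ = r - w (w = 1 at x_i, y_i and w = k at the hub).  In a
   t-factor the degrees at Y and Z force XY = XZ, so the factor uses PX with the parity of
   t and hence an even number of triangle edges at x_i and at y_i: every triangle is taken
   whole or avoided.  Taking all of them would give the hub degree 2k > t. *)

Section BundleGraph.
Variables (V B : finType) (bend1 bend2 : B -> V) (mult : B -> nat).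
Hypothesis bundle_loopless : forall b, bend1 b != bend2 b.

Definition bundle_graph : multigraph :=
  @Multigraph V {b : B & 'I_(mult b)} (fun e => bend1 (tag e)) (fun e => bend2 (tag e))
    (fun e => bundle_loopless (tag e)).

Local Notation G := bundle_graph.
Implicit Types (F : {set edge G}) (b : B) (u : V).

Definition bundle_incident b u := (bend1 b == u) || (bend2 b == u).

Definition bundle_card F b := #|[set e in F | tag e == b]|.

Definition edges_below (g : B -> nat) : {set edge G} :=
  [set e : edge G | tagged e < g (tag e)].

Lemma card_bundle_sum F : #|F| = \sum_b bundle_card F b.
Proof.
rewrite /bundle_card -sum1_card (partition_big (fun e : edge G => tag e) xpredT) //.
by apply: eq_bigr => b _; rewrite -sum1_card; apply: eq_bigl => e; rewrite !inE.
Qed.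

Lemma deg_bundle_sum F u : deg F u = \sum_(b | bundle_incident b u) bundle_card F b.
Proof.
rewrite /deg /bundle_card -sum1_card.
rewrite (partition_big (fun e : edge G => tag e) (bundle_incident^~ u)).
  apply: eq_bigr => b ub; rewrite -sum1_card; apply: eq_bigl => e; rewrite !inE.
  case: eqP => [tag_b|]; rewrite ?andbT ?andbF //.
  by rewrite -[incident e u]/(bundle_incident (tag e) u) tag_b ub andbT.
by move=> e; rewrite inE => /andP[].
Qed.

Lemma deg_bundles F {u s} : (forall b, bundle_incident b u = (b \in s)) -> uniq s ->
  deg F u = \sum_(b <- s) bundle_card F b.
Proof. by move=> s_inc s_uniq; rewrite deg_bundle_sum big_uniq //; apply: eq_bigl. Qed.

Lemma bundle_card_edges_below g b : g b <= mult b -> bundle_card (edges_below g) b = g b.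
Proof.
move=> gb; rewrite /bundle_card -sum1_card.
rewrite (eq_bigl (fun e : edge G => (tag e == b) && (tagged e < g (tag e)))); last first.
  by move=> e; rewrite !inE andbC.
rewrite -(sig_big_dep (pred1 b) (fun c (j : 'I_(mult c)) => j < g c) (fun _ _ => 1)).
by rewrite big_pred1_eq (big_ord_narrow (F := fun _ => 1) gb) sum1_card card_ord.
Qed.

Lemma bundle_card_setT b : bundle_card [set: edge G] b = mult b.
Proof.
have -> : [set: edge G] = edges_below mult by apply/setP => -[c j]; rewrite !inE ltn_ord.
exact: bundle_card_edges_below.
Qed.

Lemma bundle_card_le F b : bundle_card F b <= mult b.
Proof.
rewrite -bundle_card_setT; apply: subset_leq_card; apply/subsetP => e.
by rewrite !inE => /andP[_ ->].
Qed.

Section OneEdgePerBundle.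
Variable s : seq B.
Hypotheses (s_uniq : uniq s) (s_mult : {in s, forall b, 0 < mult b}).
Let C := edges_below (fun b => b \in s).

Lemma bundle_card_one_per_bundle b : bundle_card C b = (b \in s).
Proof.
by apply: bundle_card_edges_below; case b_s: (b \in s); rewrite ?s_mult.
Qed.

Lemma card_one_per_bundle : #|C| = size s.
Proof.
rewrite card_bundle_sum (eq_bigr _ (fun b _ => bundle_card_one_per_bundle b)).
by rewrite -big_mkcond /= sum1_card; apply/card_uniqP.
Qed.

Lemma deg_one_per_bundle u : deg C u = count (bundle_incident^~ u) s.
Proof.
rewrite deg_bundle_sum (eq_bigr _ (fun b _ => bundle_card_one_per_bundle b)).
rewrite -sum1_count [RHS]big_mkcond big_uniq //= [LHS]big_mkcond [RHS]big_mkcond /=.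
by apply: eq_bigr => b _; case: (bundle_incident b u); case: (b \in s).
Qed.

End OneEdgePerBundle.

Lemma bundle_card_gt0 F e : e \in F -> 0 < bundle_card F (tag e).
Proof. by move=> e_F; apply/card_gt0P; exists e; rewrite inE e_F eqxx. Qed.

Lemma tag_edges_below_mem (s : seq B) e : e \in edges_below (fun b => b \in s) -> tag e \in s.
Proof. by rewrite inE; case: (tag e \in s). Qed.

Lemma triangle_odd_cycle b0 b1 b2 :
    bend1 b1 = bend1 b0 -> bend1 b2 = bend2 b0 -> bend2 b2 = bend2 b1 ->
    0 < mult b0 -> 0 < mult b1 -> 0 < mult b2 ->
  is_odd_cycle (edges_below (fun b => b \in [:: b0; b1; b2])).
Proof.
move=> e1 e2 e3 m0 m1 m2; set s := [:: b0; b1; b2]; set C := edges_below _.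
have uv := negbTE (bundle_loopless b0).
have uw := negbTE (bundle_loopless b1); rewrite e1 in uw.
have vw := negbTE (bundle_loopless b2); rewrite e2 e3 in vw.
have s_uniq : uniq s.
  rewrite /= !inE !negb_or andbT -andbA; apply/and3P; split.
  - by apply: contraFneq vw => e01; rewrite -e01 eqxx.
  - by apply: contraFneq uv => e02; rewrite {1}e02 e2 eqxx.
  - by apply: contraFneq uv => e12; rewrite -e1 -e2 e12 eqxx.
have s_mult : {in s, forall b, 0 < mult b} by move=> b; rewrite !inE => /or3P[]/eqP->.
have adj b : b \in s -> adj_in C (bend1 b) (bend2 b) && adj_in C (bend2 b) (bend1 b).
  move=> b_s; pose e : edge G := Tagged (fun b => 'I_(mult b)) (Ordinal (s_mult b b_s)).
  have e_C : e \in C by rewrite inE /= b_s.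
  by apply/andP; split; apply/existsP; exists e; rewrite e_C /= !eqxx ?orbT.
have verts x : x \in verts_of C -> [|| x == bend1 b0, x == bend2 b0 | x == bend2 b1].
  rewrite inE => /existsP[e /andP[e_C]]; rewrite inE /= in e_C.
  have : tag e \in s by case: (tag e \in s) e_C.
  rewrite /incident /= !inE => /or3P[]/eqP->; rewrite ?e1 ?e2 ?e3;
    by case/orP=> /eqP->; rewrite !eqxx ?orbT.
split; last by rewrite card_one_per_bundle.
split; first by rewrite -card_gt0 card_one_per_bundle.
split.
  move=> x /verts /or3P[]/eqP->; rewrite deg_one_per_bundle //= /bundle_incident e1 e2 e3;
    by rewrite !eqxx ?uv ?uw ?vw ?(eq_sym (bend2 b0)) ?(eq_sym (bend2 b1)) ?uv ?uw ?vw.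
have /andP[a01 a10] := adj b0 (mem_head _ _).
have /andP[a02 a20] : adj_in C (bend1 b0) (bend2 b1) && adj_in C (bend2 b1) (bend1 b0).
  by rewrite -e1; apply: adj; rewrite !inE eqxx orbT.
have /andP[a12 a21] : adj_in C (bend2 b0) (bend2 b1) && adj_in C (bend2 b1) (bend2 b0).
  by rewrite -e2 -e3; apply: adj; rewrite !inE eqxx !orbT.
move=> x y /verts/or3P[]/eqP-> /verts/or3P[]/eqP->;
  by [apply: connect0 | apply: connect1].
Qed.

End BundleGraph.

Lemma sum_ord_lt n m : \sum_(i < n) (i < m) = minn m n.
Proof. by elim: n => [|n IH]; rewrite ?big_ord0 ?big_ord_recr ?IH /=; lia. Qed.

Section Construction.
Variables r k : nat.

(* Vertex (a, p) is at position p in {P, X, Y, Z} of gadget a.  The P-vertex of gadget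
   [None] is the hub, those of [Some (i, false)] and [Some (i, true)] are the other two
   corners of triangle i.  Gadget bundles inl (a, j) are PX, XY, XZ, YZ for j = 0..3. *)
Definition gadget := option ('I_k * bool).
Definition gvert := (gadget * 'I_4)%type.
Definition gbund := ((gadget * 'I_4) + ('I_k * 'I_3))%type.

Definition posP : 'I_4 := @Ordinal 4 0 isT.
Definition posX : 'I_4 := @Ordinal 4 1 isT.
Definition posY : 'I_4 := @Ordinal 4 2 isT.
Definition posZ : 'I_4 := @Ordinal 4 3 isT.

Definition hub : gvert := (None, posP).
Definition tipA i : gvert := (Some (i, false), posP).
Definition tipB i : gvert := (Some (i, true), posP).

Definition bPX a : gbund := inl (a, @Ordinal 4 0 isT).
Definition bXY a : gbund := inl (a, @Ordinal 4 1 isT).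
Definition bXZ a : gbund := inl (a, @Ordinal 4 2 isT).
Definition bYZ a : gbund := inl (a, @Ordinal 4 3 isT).
Definition bHA i : gbund := inr (i, @Ordinal 3 0 isT).
Definition bHB i : gbund := inr (i, @Ordinal 3 1 isT).
Definition bAB i : gbund := inr (i, @Ordinal 3 2 isT).

Definition gend1 (b : gbund) : gvert :=
  match b with
  | inl (a, j) => if j == 0 :> nat then (a, posP) else if j == 3 :> nat then (a, posY) else (a, posX)
  | inr (i, j) => if j == 2 :> nat then tipA i else hub
  end.

Definition gend2 (b : gbund) : gvert :=
  match b with
  | inl (a, j) => if j == 0 :> nat then (a, posX) else if j == 1 :> nat then (a, posY) else (a, posZ)
  | inr (i, j) => if j == 0 :> nat then tipA i else tipB i
  end.

Lemma gend_neq b : gend1 b != gend2 b.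
Proof.
case: b => [[a [[|[|[|[|j]]]] ?]]|[i [[|[|[|j]]] ?]]] //=; rewrite ?xpair_eqE ?andbF //.
by apply/negP => /andP[/eqP[]].
Qed.

Definition gadget_weight (a : gadget) : nat := if a is Some _ then 1 else k.

Definition gmult (b : gbund) : nat :=
  match b with
  | inl (a, j) => if j == 0 :> nat then r - (gadget_weight a).*2
                  else if j == 3 :> nat then r - gadget_weight a else gadget_weight a
  | inr _ => 1
  end.

Definition pendant_graph : multigraph := bundle_graph gmult gend_neq.

(* [eqE] exposes the [nat] comparison behind ordinal literals, which [/=] then evaluates. *)
Ltac simpl_gbund_eq :=
  do 2! rewrite ?(inj_eq inl_inj) ?(inj_eq inr_inj) ?(inj_eq (@Some_inj _)) ?xpair_eqE
    ?[_ == _ :> 'I_4]eqE ?[_ == _ :> 'I_3]eqE ?[_ == _ :> bool]eqE /= ?andbF ?andbT ?orbF.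

Ltac solve_incidence :=
  case=> [[? [[|[|[|[|?]]]] ?]]|[? [[|[|[|?]]] ?]]] //;
  rewrite /bundle_incident ?inE /=; by simpl_gbund_eq.

Local Notation incident_to := (bundle_incident gend1 gend2).

Lemma incident_X a b : incident_to b (a, posX) = (b \in [:: bPX a; bXY a; bXZ a]).
Proof. by move: b; solve_incidence. Qed.

Lemma incident_Y a b : incident_to b (a, posY) = (b \in [:: bXY a; bYZ a]).
Proof. by move: b; solve_incidence. Qed.

Lemma incident_Z a b : incident_to b (a, posZ) = (b \in [:: bXZ a; bYZ a]).
Proof. by move: b; solve_incidence. Qed.

Lemma incident_tipA i b : incident_to b (tipA i) = (b \in [:: bPX (Some (i, false)); bHA i; bAB i]).
Proof. by move: b; solve_incidence. Qed.

Lemma incident_tipB i b : incident_to b (tipB i) = (b \in [:: bPX (Some (i, true)); bHB i; bAB i]).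
Proof. by move: b; solve_incidence. Qed.

Definition hub_bundles : seq gbund :=
  bPX None :: [seq bHA i | i <- enum 'I_k] ++ [seq bHB i | i <- enum 'I_k].

Lemma mem_triangle_slot (j : 'I_3) (b : gbund) :
  (b \in [seq inr (i, j) | i <- enum 'I_k]) = if b is inr (_, j') then j' == j else false.
Proof.
apply/mapP/idP => [[i _ ->] //|]; case: b => // -[i j'] /eqP->.
by exists i; rewrite ?mem_enum.
Qed.

Lemma incident_hub b : incident_to b hub = (b \in hub_bundles).
Proof.
rewrite /hub_bundles in_cons mem_cat !mem_triangle_slot.
move: b; solve_incidence.
Qed.

Lemma hub_bundles_uniq : uniq hub_bundles.
Proof.
rewrite /hub_bundles cons_uniq mem_cat !mem_triangle_slot /= cat_uniq.
have bHA_inj : injective bHA by move=> i i' [->].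
have bHB_inj : injective bHB by move=> i i' [->].
rewrite (map_inj_uniq bHA_inj) (map_inj_uniq bHB_inj) enum_uniq andbT /=.
by apply/hasPn => b; rewrite !mem_triangle_slot; case: b => // -[i j] /eqP->.
Qed.

Local Notation G := pendant_graph.
Implicit Types F : {set edge G}.
Local Notation bcard := (@bundle_card _ _ gend1 gend2 gmult gend_neq).
Local Notation edges_below := (@edges_below _ _ gend1 gend2 gmult gend_neq).

Ltac deg_by incidence :=
  rewrite (deg_bundles _ incidence) ?big_cons ?big_nil ?addn0 ?addnA //= ?inE; by simpl_gbund_eq.

Lemma deg_X F a : deg F (a, posX) = bcard F (bPX a) + bcard F (bXY a) + bcard F (bXZ a).
Proof. deg_by (incident_X a). Qed.

Lemma deg_Y F a : deg F (a, posY) = bcard F (bXY a) + bcard F (bYZ a).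
Proof. deg_by (incident_Y a). Qed.

Lemma deg_Z F a : deg F (a, posZ) = bcard F (bXZ a) + bcard F (bYZ a).
Proof. deg_by (incident_Z a). Qed.

Lemma deg_tipA F i :
  deg F (tipA i) = bcard F (bPX (Some (i, false))) + bcard F (bHA i) + bcard F (bAB i).
Proof. deg_by (incident_tipA i). Qed.

Lemma deg_tipB F i :
  deg F (tipB i) = bcard F (bPX (Some (i, true))) + bcard F (bHB i) + bcard F (bAB i).
Proof. deg_by (incident_tipB i). Qed.

Lemma deg_hub F : deg F hub = bcard F (bPX None) + \sum_i (bcard F (bHA i) + bcard F (bHB i)).
Proof.
rewrite (deg_bundles F incident_hub hub_bundles_uniq) big_cons big_cat !big_map.
by rewrite big_split.
Qed.

Variant gvert_spec : gvert -> Type :=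
  | GvertX a : gvert_spec (a, posX)
  | GvertY a : gvert_spec (a, posY)
  | GvertZ a : gvert_spec (a, posZ)
  | GvertHub : gvert_spec hub
  | GvertA i : gvert_spec (tipA i)
  | GvertB i : gvert_spec (tipB i).

Lemma gvertP u : gvert_spec u.
Proof.
case: u => a [[|[|[|[|p]]]] lt_p] //.
- have -> : Ordinal lt_p = posP by exact: val_inj.
  by case: a => [[i []]|]; constructor.
- have -> : Ordinal lt_p = posX by exact: val_inj.
  exact: GvertX.
- have -> : Ordinal lt_p = posY by exact: val_inj.
  exact: GvertY.
- have -> : Ordinal lt_p = posZ by exact: val_inj.
  exact: GvertZ.
Qed.

Lemma gadget_weight_le a : gadget_weight a <= k.
Proof. by case: a => [[i _]|] //=; apply: leq_ltn_trans (ltn_ord i). Qed.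

Lemma pendant_regular : 2 * k <= r -> regular G r.
Proof.
move=> le_2k_r u; case: u / gvertP => [a|a|a||i|i];
  rewrite ?deg_X ?deg_Y ?deg_Z ?deg_hub ?deg_tipA ?deg_tipB !bundle_card_setT /=.
- have := gadget_weight_le a; lia.
- have := gadget_weight_le a; lia.
- have := gadget_weight_le a; lia.
- under eq_bigr do rewrite !bundle_card_setT /=.
  rewrite sum_nat_const card_ord; lia.
- have := ltn_ord i; lia.
- have := ltn_ord i; lia.
Qed.

Definition triangle i : {set edge G} := edges_below (fun b => b \in [:: bHA i; bHB i; bAB i]).

Lemma triangle_is_odd_cycle i : is_odd_cycle (triangle i).
Proof. exact: triangle_odd_cycle. Qed.

Lemma triangles_disjoint i j : i != j -> [disjoint triangle i & triangle j].
Proof.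
move=> neq_ij; apply/pred0P => e /=; apply/negP => /andP[/tag_edges_below_mem e_i].
move/tag_edges_below_mem; move: e_i; rewrite !inE.
by case/or3P=> /eqP->; rewrite /=; simpl_gbund_eq; rewrite (negbTE neq_ij).
Qed.

Section FactorParity.
Variables (t : nat) (F : {set edge G}).
Hypothesis F_factor : factor t F.

Lemma gadget_port a : bcard F (bPX a) + (bcard F (bXY a)).*2 = t.
Proof.
have := F_factor (a, posX); have := F_factor (a, posY); have := F_factor (a, posZ).
rewrite deg_X deg_Y deg_Z; lia.
Qed.

Lemma triangle_balanced i :
  bcard F (bHA i) = bcard F (bAB i) /\ bcard F (bHB i) = bcard F (bAB i).
Proof.
have := F_factor (tipA i); have := F_factor (tipB i); rewrite deg_tipA deg_tipB.
have := gadget_port (Some (i, false)); have := gadget_port (Some (i, true)).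
have := bundle_card_le F (bHA i); have := bundle_card_le F (bHB i).
have := bundle_card_le F (bAB i); rewrite /=; lia.
Qed.

Lemma triangle_met i : ~~ [disjoint triangle i & F] -> bcard F (bHA i) + bcard F (bHB i) = 2.
Proof.
case/pred0Pn => e /andP[/tag_edges_below_mem e_i /bundle_card_gt0].
have [eA eB] := triangle_balanced i; have := bundle_card_le F (bAB i).
by move: e_i; rewrite !inE /= => /or3P[]/eqP->; lia.
Qed.

Lemma factor_avoids_triangle : t < k.*2 -> exists i, [disjoint triangle i & F].
Proof.
move=> lt_t_2k; apply/existsP; apply: contraLR lt_t_2k; rewrite negb_exists => /forallP met.
have := F_factor hub; rewrite deg_hub (eq_bigr (fun=> 2)) => [|i _]; last exact: triangle_met.
rewrite sum_nat_const card_ord; lia.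
Qed.

End FactorParity.

Section FactorWitness.
Variable t : nat.
Hypotheses (k_half : k = t./2.+1) (t_le : t + 2 <= r).

(* Triangles [0, ..., t/2 - 1] are taken whole; the hub gadget supplies the remaining [odd t]. *)
Definition gadget_share (a : gadget) : nat := if a is Some (i, _) then i < t./2 else t./2.

Definition factor_load (b : gbund) : nat :=
  match b with
  | inl (a, j) => if j == 0 :> nat then t - (gadget_share a).*2
                  else if j == 3 :> nat then t - gadget_share a else gadget_share a
  | inr (i, _) => i < t./2
  end.

Lemma factor_load_le b : factor_load b <= gmult b.
Proof.
case: b => [[a [[|[|[|[|j]]]] ?]]|[i j]] //=; last by case: (i < t./2).
all: by case: a => [[i ?]|] /=; [case: (i < t./2)|]; lia.
Qed.

Lemma gadget_share_le a : (gadget_share a).*2 <= t.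
Proof. by case: a => [[i _]|] /=; [case: ltnP|]; lia. Qed.

Definition factor_witness : {set edge G} := edges_below factor_load.

Lemma factor_witness_factor : factor t factor_witness.
Proof.
have load b : bcard factor_witness b = factor_load b.
  by apply: bundle_card_edges_below; apply: factor_load_le.
move=> u; case: u / gvertP => [a|a|a||i|i];
  rewrite ?deg_X ?deg_Y ?deg_Z ?deg_hub ?deg_tipA ?deg_tipB !load.
- have := gadget_share_le a; rewrite /=; lia.
- have := gadget_share_le a; rewrite /=; lia.
- have := gadget_share_le a; rewrite /=; lia.
- under eq_bigr do rewrite !load /=.
  rewrite big_split /= sum_ord_lt; lia.
- have := gadget_share_le (Some (i, false)); rewrite /=; lia.
- have := gadget_share_le (Some (i, true)); rewrite /=; lia.
Qed.

End FactorWitness.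

End Construction.

Theorem theorem2p1 (r t : nat) :
  1 <= t -> t <= r - 2 ->
  exists G : multigraph,
    regular G r /\
    (exists F : {set edge G}, factor t F) /\
    exists O : {set {set edge G}},
      (forall C, C \in O -> is_odd_cycle C) /\
      (forall C D, C \in O -> D \in O -> C != D -> [disjoint C & D]) /\
      (forall F : {set edge G}, factor t F -> exists2 C, C \in O & [disjoint C & F]).
Proof.
move=> t_gt0 t_le.
exists (pendant_graph r t./2.+1); split; first by apply: pendant_regular; lia.
split; first by exists (factor_witness r t./2.+1 t); apply: factor_witness_factor; lia.
exists [set triangle r i | i : 'I_t./2.+1]; split; last split.
- by move=> C /imsetP[i _ ->]; apply: triangle_is_odd_cycle.
- move=> C D /imsetP[i _ ->] /imsetP[j _ ->] neq_CD; apply: triangles_disjoint.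
  by apply: contraNneq neq_CD => ->.
- move=> F F_factor; have [|i avoid_i] := factor_avoids_triangle F_factor; first by lia.
  by exists (triangle r i); first exact: imset_f.
Qed.
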